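(* Let $\{G_i\}$ be a family of connected graphs with common induced subgraph $J$, embedded as $J_i\subseteq G_i$, such that $\{(G_i|J_i)\}$ is isometric, and let $H=\amalg\{(G_i|J_i)\}$. Suppose $\dim_l(H)=\sum_i\dim_l(G_i)$. If, for each $k$, $B_k$ is a local metric basis for $G_k$ (viewed as a subset of $V(H)$), then $B_i\cap B_j=\emptyset$ for all $i\neq j$.
   Context: $d_G$ is shortest-path distance in $G$. A vertex $w$ distinguishes an edge $uv$ of $G$ if $d_G(w,u)\neq d_G(w,v)$. A local metric set of $G$ is a set of vertices such that every edge is distinguished by one of them; a local metric basis is one of minimum cardinality, and $\dim_l(G)$ is that cardinality. $J$ is a common induced subgraph of each $G_i$ via injective maps $\iota_i:V(J)\to V(G_i)$ with $\iota_i(x)\iota_i(y)\in E(G_i)$ iff $xy\in E(J)$; $J_i$ is the induced image, $x^i=\iota_i(x)$. $H=\amalg\{(G_i|J_i)\}$ is obtained from the disjoint union of the $G_i$ by identifying, for each $x\in V(J)$, all $x^i$ into one vertex; each $G_i$ is regarded as a subgraph of $H$ (so distinct $G_i$, $G_j$ share exactly the vertices of $J$). The family is isometric if $d_{G_i}(a^i,b^i)=d_{G_j}(a^j,b^j)$ for all $i,j$ and $a,b\in V(J)$. *)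

From mathcomp Require Import all_boot.
Set Implicit Arguments. Unset Strict Implicit. Unset Printing Implicit Defensive.

Section Graphs.
Variable T : finType.
Implicit Types (e : rel T).

Fixpoint within e (n : nat) (x y : T) : bool :=
  if n is n'.+1 then (x == y) || [exists z, e x z && within e n' z y]
  else x == y.

(* shortest-path distance; for unreachable pairs it is #|T| (acts as infinity,
   since reachable pairs are at distance < #|T|) *)
Definition dist e (x y : T) : nat := find (fun n => within e n x y) (iota 0 #|T|).

Definition simple_graph e := irreflexive e /\ symmetric e.
Definition connected_graph e := forall x y : T, connect e x y.

Definition distinguishes e (w u v : T) := dist e w u != dist e w v.

Definition local_metric_set e (S : {set T}) :=
  [forall u, forall v, e u v ==> [exists w in S, distinguishes e w u v]].

(* dim_l: minimum cardinality of a local metric set (setT always is one) *)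
Definition local_metric_dim e : nat :=
  \big[minn/#|T|]_(S : {set T} | local_metric_set e S) #|S|.

Definition local_metric_basis e (B : {set T}) :=
  local_metric_set e B && (#|B| == local_metric_dim e).
End Graphs.

Section Amalgam.
Variables (I : finType) (V : I -> finType) (VJ : finType)
          (phi : forall i, VJ -> V i).

(* vertices of H: the vertices of J, plus for each i the vertices of G_i
   outside J_i *)
Definition amalg_vertex : finType :=
  (VJ + {i : I & {v : V i | v \notin codom (phi i)}})%type.

(* canonical embedding of V(G_i) into V(H): x^i |-> x, other v |-> (i, v) *)
Definition amalg_emb (i : I) (v : V i) : amalg_vertex :=
  match (v \in codom (phi i)) as b return (v \in codom (phi i)) = b -> amalg_vertex with
  | true => fun h => inl (iinv h)
  | false => fun h => inr (Tagged (fun j => {v : V j | v \notin codom (phi j)}) (exist _ v (negbT h)))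
  end erefl.

Variable G : forall i, rel (V i).

Definition amalg_rel : rel amalg_vertex := fun u w =>
  [exists i, [exists a : V i, [exists b : V i,
     [&& G a b, amalg_emb a == u & amalg_emb b == w]]]].
End Amalgam.

From mathcomp Require Import all_boot.
Set Implicit Arguments. Unset Strict Implicit. Unset Printing Implicit Defensive.

(* Each G_k sits isometrically in H: a walk of G_k is a walk of H, and
   conversely the function [pot] below, 1-Lipschitz along the edges of H and
   vanishing at the target, bounds H-distances from below by G_k-distances.
   Hence the images of the bases B_k jointly form a local metric set of H, of
   size at most sum_k |B_k| = sum_k dim_l(G_k) = dim_l(H) <= its size; so no
   vertex can be counted twice. *)

Section Distance.
Variables (T : finType) (e : rel T).

Lemma dist_le_card x y : dist e x y <= #|T|.
Proof. by have := find_size (fun n => within e n x y) (iota 0 #|T|); rewrite size_iota. Qed.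

Lemma dist_le n x y : within e n x y -> dist e x y <= n.
Proof.
move=> wn; have [ltnT|] := ltnP n #|T|; last exact: leq_trans (dist_le_card x y).
rewrite leqNgt; apply/negP => /(before_find 0).
by rewrite nth_iota // add0n wn.
Qed.

Lemma within_path x p : path e x p -> within e (size p) x (last x p).
Proof.
elim: p x => [|z p IHp] x /=; first by rewrite eqxx.
by case/andP=> exz pz; apply/orP; right; apply/existsP; exists z; rewrite exz IHp.
Qed.

Lemma within_connect n x y : within e n x y -> connect e x y.
Proof.
elim: n x => [|n IHn] x /=; first by move/eqP->.
case/orP=> [/eqP-> //|/existsP[z /andP[exz wzy]]].
exact: connect_trans (connect1 exz) (IHn _ wzy).
Qed.

Lemma withinS n x y : within e n x y -> within e n.+1 x y.
Proof.
elim: n x => [|n IHn] x /=; first by move->.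
case/orP=> [-> //|/existsP[z /andP[exz wzy]]].
by apply/orP; right; apply/existsP; exists z; rewrite exz; apply: IHn.
Qed.

Lemma within_leq n m x y : n <= m -> within e n x y -> within e m x y.
Proof. by move/subnK<- => wn; elim: (m - n) => [|k IHk] //; rewrite addSn; apply: withinS. Qed.

Lemma within_cat n m x y z :
  within e n x y -> within e m y z -> within e (n + m) x z.
Proof.
elim: n x => [|n IHn] x; first by move/eqP->.
case/orP=> [/eqP-> | /existsP[w /andP[exw wwy]]] wyz.
  by apply: within_leq wyz; rewrite leq_addl.
by rewrite addSn /=; apply/orP; right; apply/existsP; exists w; rewrite exw; apply: IHn.
Qed.

Lemma within_dist x y : connect e x y -> within e (dist e x y) x y.
Proof.
case/connectP=> p ep ->; have [q eq uq _] := shortenP ep.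
have ltqT : size q < #|T| by move/card_uniqP: uq => /= <-; apply: max_card.
have hasq : has (fun n => within e n x (last x q)) (iota 0 #|T|).
  by apply/hasP; exists (size q); rewrite ?mem_iota ?within_path.
have := nth_find 0 hasq; rewrite /dist nth_iota //.
by move: hasq; rewrite has_find size_iota.
Qed.

Lemma dist_refl x : dist e x x = 0.
Proof. by apply/eqP; rewrite -leqn0 dist_le //= eqxx. Qed.

Lemma dist_le1 a b : e a b -> dist e a b <= 1.
Proof.
by move=> eab; apply: dist_le; apply/orP; right; apply/existsP; exists b; rewrite eab /= eqxx.
Qed.

Lemma dist_lipschitz_le (f : T -> nat) t :
    f t = 0 -> (forall a b, e a b -> f a <= (f b).+1) ->
  forall x, connect e x t -> f x <= dist e x t.
Proof.
move=> ft0 f_lip x /within_dist; move: (dist e x t) => n.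
elim: n x => [|n IHn] x /=; first by move/eqP->; rewrite ft0.
case/orP=> [/eqP-> | /existsP[z /andP[exz wzt]]]; first by rewrite ft0.
by rewrite (leq_trans (f_lip _ _ exz)) ?ltnS ?IHn.
Qed.

Hypothesis e_conn : connected_graph e.

Lemma dist_triangle x y z : dist e x z <= dist e x y + dist e y z.
Proof. by apply: dist_le; apply: within_cat; apply: within_dist. Qed.

Lemma dist_edge a b z : e a b -> dist e a z <= (dist e b z).+1.
Proof.
by move=> eab; rewrite -add1n (leq_trans (dist_triangle a b z)) ?leq_add2r ?dist_le1.
Qed.

End Distance.

Lemma within_hom (T T' : finType) (e : rel T) (e' : rel T') (h : T -> T') n x y :
  (forall a b, e a b -> e' (h a) (h b)) -> within e n x y -> within e' n (h x) (h y).
Proof.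
move=> h_hom; elim: n x => [|n IHn] x /=; first by move/eqP->.
case/orP=> [/eqP->|/existsP[z /andP[exz wzy]]]; first by rewrite eqxx.
by apply/orP; right; apply/existsP; exists (h z); rewrite h_hom ?IHn.
Qed.

Lemma dist_hom_le (T T' : finType) (e : rel T) (e' : rel T') (h : T -> T') x y :
    (forall a b, e a b -> e' (h a) (h b)) -> connect e x y ->
  dist e' (h x) (h y) <= dist e x y.
Proof. by move=> h_hom /within_dist wxy; apply/dist_le/(within_hom h_hom). Qed.

Section MinBound.
Variables (T : finType) (P : pred T) (F : T -> nat) (N : nat).

Lemma bigmin_le x : P x -> \big[minn/N]_(y | P y) F y <= F x.
Proof.
rewrite unlock; have : x \in index_enum T by rewrite mem_index_enum.
elim: (index_enum T) => [|z s IHs] //=; rewrite inE => /orP[/eqP<- Px|xs Px].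
  by rewrite Px geq_minl.
by case: (P z); rewrite ?geq_min IHs ?orbT.
Qed.

Lemma bigmin_le_idx : \big[minn/N]_(y | P y) F y <= N.
Proof.
rewrite unlock; elim: (index_enum T) => [|z s IHs] //=.
by case: (P z); rewrite ?geq_min IHs ?orbT.
Qed.

Lemma leq_bigmin m :
  m <= N -> (forall x, P x -> m <= F x) -> m <= \big[minn/N]_(y | P y) F y.
Proof. by move=> lemN leFm; elim/big_ind: _ => // n1 n2; rewrite leq_min => ->. Qed.

End MinBound.

Lemma local_metric_dim_le (T : finType) (e : rel T) S :
  local_metric_set e S -> local_metric_dim e <= #|S|.
Proof. by move=> lmsS; rewrite /local_metric_dim (bigmin_le _ _ lmsS). Qed.

Section Amalgam.
Variables (I : finType) (V : I -> finType) (VJ : finType) (phi : forall i, VJ -> V i).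
Local Notation emb := (@amalg_emb I V VJ phi _).

Lemma amalg_emb_in k (v : V k) (vJ : v \in codom (phi k)) : emb v = inl (iinv vJ).
Proof.
rewrite /amalg_emb; move: (@erefl _ (v \in codom (phi k))).
case: {2 3}(v \in codom (phi k)) => vJ'; first by rewrite (bool_irrelevance vJ' vJ).
by exfalso; move: vJ; rewrite vJ'.
Qed.

Lemma amalg_emb_notin k (v : V k) (vJ : v \notin codom (phi k)) :
  emb v = inr (Tagged (fun j => {v : V j | v \notin codom (phi j)}) (exist _ v vJ)).
Proof.
rewrite /amalg_emb; move: (@erefl _ (v \in codom (phi k))).
case: {2 3}(v \in codom (phi k)) => vJ'; first by exfalso; move: vJ; rewrite vJ'.
by rewrite (bool_irrelevance (negbT vJ') vJ).
Qed.

Lemma amalg_emb_inj k : injective (@amalg_emb I V VJ phi k).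
Proof.
move=> v v'; case: (boolP (v \in codom (phi k))) => vJ;
  case: (boolP (v' \in codom (phi k))) => v'J;
  rewrite ?(amalg_emb_in vJ) ?(amalg_emb_in v'J) ?(amalg_emb_notin vJ) ?(amalg_emb_notin v'J) //.
  by case=> eq_iinv; rewrite -(f_iinv vJ) -(f_iinv v'J) eq_iinv.
by case=> /(congr1 (tagged_as (Tagged V v))); rewrite !tagged_asE.
Qed.

Lemma amalg_emb_eq k k' (v : V k) (v' : V k') :
  k != k' -> emb v = emb v' -> exists j, v = phi k j /\ v' = phi k' j.
Proof.
move=> neq_kk'; case: (boolP (v \in codom (phi k))) => vJ;
  case: (boolP (v' \in codom (phi k'))) => v'J;
  rewrite ?(amalg_emb_in vJ) ?(amalg_emb_in v'J) ?(amalg_emb_notin vJ) ?(amalg_emb_notin v'J) //.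
  by case=> eq_iinv; exists (iinv vJ); rewrite f_iinv eq_iinv f_iinv.
by case=> eq_kk'; rewrite eq_kk' eqxx in neq_kk'.
Qed.

Unset Implicit Arguments.
Variable G : forall i, rel (V i).
Set Implicit Arguments.
Local Notation H := (@amalg_rel I V VJ phi G).

Lemma amalg_rel_emb k (a b : V k) : G k a b -> H (emb a) (emb b).
Proof.
move=> gab; apply/existsP; exists k; apply/existsP; exists a; apply/existsP; exists b.
by rewrite gab !eqxx.
Qed.

Hypothesis G_conn : forall i, connected_graph (G i).
Hypothesis phi_isometric : forall i j (a b : VJ),
  dist (G i) (phi i a) (phi i b) = dist (G j) (phi j a) (phi j b).

Section Potential.
Variables (i : I) (y : V i).
Let N := #|V i|.

Let via_J {k} (v : V k) :=
  \big[minn/N]_(j : VJ) (dist (G k) v (phi k j) + dist (G i) (phi i j) y).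

(* [pot h] bounds the H-distance from h to y from below: h is reached either
   inside G_i or, from another G_k, through a vertex of J ([via_J]); the
   isometry hypothesis makes both readings agree on J. *)
Let pot (h : amalg_vertex phi) := minn
  (\big[minn/N]_(v : V i | emb v == h) dist (G i) v y)
  (\big[minn/N]_k \big[minn/N]_(v : V k | emb v == h) via_J v).

Lemma via_J_phi k k' j : via_J (phi k j) = via_J (phi k' j).
Proof. by apply: eq_bigr => j' _; rewrite (phi_isometric k k'). Qed.

Lemma via_J_phi_le k j : via_J (phi k j) <= dist (G i) (phi i j) y.
Proof. by rewrite (via_J_phi k i) (leq_trans (bigmin_le _ _ (isT : predT j))) ?dist_refl. Qed.

Lemma dist_le_via_J v : dist (G i) v y <= via_J v.
Proof.
by apply: leq_bigmin => [|j _]; rewrite ?dist_le_card ?dist_triangle.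
Qed.

Lemma via_J_edge k (a b : V k) : G k a b -> via_J a <= (via_J b).+1.
Proof.
move=> gab; rewrite -add1n -leq_subLR; apply: leq_bigmin => [|j _].
  by rewrite leq_subLR (leq_trans (bigmin_le_idx _ _ _)) ?leq_addl.
rewrite leq_subLR (leq_trans (bigmin_le _ _ (isT : predT j))) //.
by rewrite addnA leq_add2r add1n dist_edge.
Qed.

Lemma pot_le_dist v : pot (emb v) <= dist (G i) v y.
Proof. by rewrite geq_min; apply/orP; left; apply: bigmin_le. Qed.

Lemma pot_le_via_J k (v : V k) : pot (emb v) <= via_J v.
Proof.
rewrite geq_min; apply/orP; right.
by rewrite (leq_trans (bigmin_le _ _ (isT : predT k))) //; apply: bigmin_le.
Qed.

Lemma pot_le_card h : pot h <= N.
Proof. by rewrite geq_min bigmin_le_idx. Qed.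

Lemma dist_le_pot v : dist (G i) v y <= pot (emb v).
Proof.
rewrite leq_min; apply/andP; split; apply: leq_bigmin; rewrite ?dist_le_card //.
  by move=> v' /eqP/amalg_emb_inj->.
move=> k _; apply: leq_bigmin; rewrite ?dist_le_card // => v' /eqP emb_v'.
have [eq_ik|neq_ki] := eqVneq i k.
  by case: k / eq_ik v' emb_v' => v' /amalg_emb_inj->; apply: dist_le_via_J.
have [j [-> ->]] := amalg_emb_eq neq_ki (esym emb_v').
by rewrite (via_J_phi k i) dist_le_via_J.
Qed.

Lemma pot_edge_le_via_J k (a b : V k) : G k a b -> pot (emb a) <= (via_J b).+1.
Proof. by move=> gab; rewrite (leq_trans (pot_le_via_J a)) ?via_J_edge. Qed.

Lemma pot_edge k (a b : V k) : G k a b -> pot (emb a) <= (pot (emb b)).+1.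
Proof.
move=> gab; rewrite -add1n -leq_subLR leq_min.
have le_N : pot (emb a) - 1 <= N by rewrite leq_subLR (leq_trans (pot_le_card _)) ?leq_addl.
apply/andP; split; apply: leq_bigmin => //.
  move=> {le_N} v /eqP emb_v; rewrite leq_subLR add1n; have [eq_ik|neq_ik] := eqVneq i k.
    case: k / eq_ik a b gab emb_v => a b gab /amalg_emb_inj->.
    by rewrite (leq_trans (pot_le_dist a)) ?dist_edge.
  have [j [-> eq_b]] := amalg_emb_eq neq_ik emb_v.
  by rewrite (leq_trans (pot_edge_le_via_J gab)) // eq_b ltnS via_J_phi_le.
move=> k' _; apply: leq_bigmin => // v /eqP emb_v; rewrite leq_subLR add1n.
have [eq_kk'|neq_kk'] := eqVneq k k'.
  by case: k' / eq_kk' v emb_v => v /amalg_emb_inj->; apply: pot_edge_le_via_J.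
have [j [eq_b ->]] := amalg_emb_eq neq_kk' (esym emb_v).
by rewrite (via_J_phi k' k) -eq_b pot_edge_le_via_J.
Qed.

Lemma pot_H_edge h h' : H h h' -> pot h <= (pot h').+1.
Proof.
by case/existsP=> k /existsP[a /existsP[b /and3P[gab /eqP<- /eqP<-]]]; apply: pot_edge.
Qed.

Lemma pot_root : pot (emb y) = 0.
Proof. by apply/eqP; rewrite -leqn0 (leq_trans (pot_le_dist y)) ?dist_refl. Qed.

Lemma dist_le_amalg v : dist (G i) v y <= dist H (emb v) (emb y).
Proof.
have conn_vy : connect H (emb v) (emb y).
  exact/(within_connect (within_hom (@amalg_rel_emb i) (within_dist (G_conn v y)))).
by rewrite (leq_trans (dist_le_pot v)) // dist_lipschitz_le ?pot_root //; apply: pot_H_edge.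
Qed.

End Potential.

Lemma amalg_dist k (u w : V k) : dist H (emb u) (emb w) = dist (G k) u w.
Proof.
by apply/eqP; rewrite eqn_leq dist_le_amalg dist_hom_le //; [apply: amalg_rel_emb | apply: G_conn].
Qed.

Lemma amalg_local_metric_set (S : forall k, {set V k}) :
    (forall k, local_metric_set (G k) (S k)) ->
  local_metric_set H (\bigcup_k [set emb x | x in S k]).
Proof.
move=> lmsS; apply/forallP=> u; apply/forallP=> w; apply/implyP.
case/existsP=> k /existsP[a /existsP[b /and3P[gab /eqP<- /eqP<-]]].
have /forallP/(_ a)/forallP/(_ b)/implyP/(_ gab)/existsP[x /andP[xS dx]] := lmsS k.
apply/existsP; exists (emb x); apply/andP; split; last by rewrite /distinguishes !amalg_dist.
by apply/bigcupP; exists k => //; apply: imset_f.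
Qed.

End Amalgam.

Section UnionBound.
Variables (I T : finType) (F : I -> {set T}).

Lemma card_bigcup_le (P : pred I) : #|\bigcup_(k | P k) F k| <= \sum_(k | P k) #|F k|.
Proof.
elim/big_ind2: _ => [|m A n B leAm leBn|k _]; rewrite ?cards0 //.
by rewrite (leq_trans (leq_card_setU A B)) ?leq_add.
Qed.

Lemma card_bigcup_disjoint :
    \sum_k #|F k| <= #|\bigcup_k F k| ->
  forall i j, i != j -> F i :&: F j = set0.
Proof.
move=> le_sum i j neq_ij; set U := \bigcup_(k | k != i) F k.
have disj_U : [disjoint F i & U].
  rewrite -(leq_card_setU (F i) U) eqn_leq leq_card_setU /=.
  move: le_sum; rewrite (bigD1 i) //= [\bigcup_k F k](bigD1 i) //= -/U.
  by apply: leq_trans; rewrite leq_add2l card_bigcup_le.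
apply/eqP; rewrite -subset0 -(disjoint_setI0 disj_U) setIS //.
by apply: (bigcup_sup j); rewrite eq_sym.
Qed.

End UnionBound.

Theorem lemma5 (I : finType) (V : I -> finType) (G : forall i, rel (V i))
  (VJ : finType) (eJ : rel VJ) (phi : forall i, VJ -> V i) :
  (forall i, simple_graph (G i)) ->
  (forall i, connected_graph (G i)) ->
  (forall i, injective (phi i)) ->
  (forall i (x y : VJ), G i (phi i x) (phi i y) = eJ x y) ->
  (forall i j (a b : VJ),
      dist (G i) (phi i a) (phi i b) = dist (G j) (phi j a) (phi j b)) ->
  local_metric_dim (@amalg_rel I V VJ phi G) = \sum_(i : I) local_metric_dim (G i) ->
  forall B : forall k, {set V k},
  (forall k, local_metric_basis (G k) (B k)) ->
  forall i j, i != j ->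
  [set @amalg_emb I V VJ phi _ x | x in B i] :&: [set @amalg_emb I V VJ phi _ x | x in B j] = set0.
Proof.
move=> _ G_conn _ _ phi_isometric dim_H B B_basis.
apply: card_bigcup_disjoint.
have lms_B k : local_metric_set (G k) (B k) by case/andP: (B_basis k).
have card_B k : #|B k| = local_metric_dim (G k) by case/andP: (B_basis k) => _ /eqP.
rewrite (leq_trans _ (local_metric_dim_le (amalg_local_metric_set G_conn phi_isometric lms_B))) //.
by rewrite dim_H leq_sum // => k _; rewrite -card_B leq_imset_card.
Qed.
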